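(* Let $H^2\times H^2$ carry the product metric $\rho(\mathsf z,\mathsf w)=\sqrt{d_H(z_1,w_1)^2+d_H(z_2,w_2)^2}$ and for $\mathsf z,\mathsf w$ let $E(\mathsf z,\mathsf w)=\{\mathsf x:\rho(\mathsf x,\mathsf z)=\rho(\mathsf x,\mathsf w)\}$. Let $\gamma=(g_1,g_2)$, acting by $(z_1,z_2)\mapsto(g_1(z_1),g_2(z_2))$, where $g_1,g_2\in\mathrm{PSL}(2,\mathbb R)$ are both hyperbolic isometries of $H^2$. Let $\mathsf z=(z_1,z_2)$ where $z_i$ lies on the invariant axis of $g_i$ for $i=1,2$. Then $E(\mathsf z,\gamma(\mathsf z))$ and $E(\mathsf z,\gamma^{-1}(\mathsf z))$ are disjoint. In particular, the Dirichlet domain for the cyclic group $\langle\gamma\rangle$ with basepoint $\mathsf z$ is two-faced, i.e. it equals the intersection of the two closed half-spaces containing $\mathsf z$ bounded by $E(\mathsf z,\gamma(\mathsf z))$ and $E(\mathsf z,\gamma^{-1}(\mathsf z))$.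
   Context: A hyperbolic isometry of $H^2$ fixes exactly two ideal boundary points; its invariant axis is the geodesic joining them. The Dirichlet domain for a group $G$ of isometries with basepoint $p$ is $\{q:\rho(p,q)\le\rho(p,g(q))\text{ for all } g\in G\setminus\{\mathrm{id}\}\}$, i.e. the intersection over $g\neq \mathrm{id}$ of the closed half-spaces containing $p$ bounded by $E(p,g(p))$. *)

(* concrete reals R. Upper half-plane model of H^2. *)
From Stdlib Require Import Reals Lra ZArith.
Open Scope R_scope.

Definition pt := (R * R)%type.
Definition inH (p : pt) : Prop := 0 < snd p.

Definition arcosh (t : R) : R := ln (t + sqrt (t ^ 2 - 1)).

Definition dH (p q : pt) : R :=
  arcosh (1 + ((fst p - fst q) ^ 2 + (snd p - snd q) ^ 2)
               / (2 * snd p * snd q)).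

(* A 2x2 real matrix (a b; c d); elements of PSL(2,R) are represented by
   matrices of determinant 1 (the action does not depend on the sign). *)
Record mat := Mat { ma : R; mb : R; mc : R; md : R }.
Definition det (g : mat) : R := ma g * md g - mb g * mc g.
Definition inSL2 (g : mat) : Prop := det g = 1.

Definition minv (g : mat) : mat := Mat (md g) (- mb g) (- mc g) (ma g).

(* Moebius action z |-> (a z + b)/(c z + d) on the upper half-plane,
   written in real coordinates z = x + i y. *)
Definition mob (g : mat) (p : pt) : pt :=
  let x := fst p in let y := snd p in
  let den := (mc g * x + md g) ^ 2 + (mc g * y) ^ 2 in
  (((ma g * x + mb g) * (mc g * x + md g) + ma g * mc g * y ^ 2) / den,
   det g * y / den).

Inductive ideal := Inf | Fin (x : R).

Definition ideal_act (g : mat) (p : ideal) : ideal :=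
  match p with
  | Inf => if Req_EM_T (mc g) 0 then Inf else Fin (ma g / mc g)
  | Fin x => if Req_EM_T (mc g * x + md g) 0 then Inf
             else Fin ((ma g * x + mb g) / (mc g * x + md g))
  end.

Definition fixes_ideal (g : mat) (p : ideal) : Prop := ideal_act g p = p.

Definition hyperbolic (g : mat) : Prop := Rabs (ma g + md g) > 2.

Definition on_geodesic (p q : ideal) (z : pt) : Prop :=
  inH z /\
  match p, q with
  | Fin x1, Fin x2 =>
      (fst z - (x1 + x2) / 2) ^ 2 + (snd z) ^ 2 = ((x1 - x2) / 2) ^ 2
  | Fin x1, Inf | Inf, Fin x1 => fst z = x1
  | Inf, Inf => False
  end.

Definition on_axis (g : mat) (z : pt) : Prop :=
  exists p q, p <> q /\ fixes_ideal g p /\ fixes_ideal g q /\ on_geodesic p q z.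

Definition pt2 := (pt * pt)%type.
Definition inH2 (z : pt2) : Prop := inH (fst z) /\ inH (snd z).

Definition rho (z w : pt2) : R :=
  sqrt (dH (fst z) (fst w) ^ 2 + dH (snd z) (snd w) ^ 2).

Definition bisector (z w : pt2) (x : pt2) : Prop :=
  inH2 x /\ rho x z = rho x w.

Definition halfspace (z w : pt2) (x : pt2) : Prop :=
  inH2 x /\ rho x z <= rho x w.

Definition act2 (g1 g2 : mat) (z : pt2) : pt2 :=
  (mob g1 (fst z), mob g2 (snd z)).

Definition act2_pow (g1 g2 : mat) (n : Z) (z : pt2) : pt2 :=
  if Z.leb 0 n then Nat.iter (Z.to_nat n) (act2 g1 g2) z
  else Nat.iter (Z.to_nat (- n)) (act2 (minv g1) (minv g2)) z.

Definition dirichlet_cyclic (g1 g2 : mat) (p : pt2) (q : pt2) : Prop :=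
  inH2 q /\
  forall n : Z,
    (exists w, inH2 w /\ act2_pow g1 g2 n w <> w) ->
    rho p q <= rho p (act2_pow g1 g2 n q).

(* If w lies on the axis of a hyperbolic g with translation length l, then for every x
   the hyperbolic law of cosines gives
     cosh d(x,gw) + cosh d(x,g^-1 w) = 2 cosh l cosh d(x,w),
     cosh d(x,gw) cosh d(x,g^-1 w) >= cosh^2 d(x,w) + cosh^2 l - 1,
   and these two relations force 2 d(x,w)^2 < d(x,gw)^2 + d(x,g^-1 w)^2.  Adding the two
   factors, n |-> rho(x, gamma^n z)^2 is strictly midpoint convex along the orbit of z.
   A point equidistant from z, gamma z and gamma^-1 z would contradict strict convexity, and
   a point no farther from z than from gamma z and gamma^-1 z is, by convexity, no farther
   from z than from any gamma^n z: the Dirichlet domain is cut out by the two faces. *)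

From Stdlib Require Import Reals Lra ZArith.
Open Scope R_scope.

Lemma iter_adjoint {T U : Type} (P : T -> Prop) (d : T -> T -> U) (A B : T -> T) :
  (forall u, P u -> P (A u)) -> (forall u, P u -> P (B u)) ->
  (forall u v, P u -> P v -> d u (A v) = d (B u) v) ->
  forall n u v, P u -> P v -> d u (Nat.iter n A v) = d (Nat.iter n B u) v.
Proof.
  intros HA HB Hadj n. induction n as [|n IH]; intros u v Hu Hv; [reflexivity|].
  rewrite Nat.iter_succ, Nat.iter_succ_r, Hadj by (auto; apply Nat.iter_invariant; auto).
  apply IH; auto.
Qed.

Lemma convex_seq_ge_first (t : nat -> R) :
  t 0%nat <= t 1%nat -> (forall n, 2 * t (S n) <= t n + t (S (S n))) ->
  forall n, t 0%nat <= t n.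
Proof.
  intros H01 Hconv.
  assert (Hincr : forall n, t n <= t (S n)).
  { induction n as [|n IH]; [assumption|]. specialize (Hconv n). lra. }
  induction n as [|n IH]; [lra|]. specialize (Hincr n). lra.
Qed.

Lemma cosh_exp x : cosh x = (exp x + / exp x) / 2.
Proof. unfold cosh. rewrite exp_Ropp. reflexivity. Qed.

Lemma cosh_lt s t : 0 <= s -> s < t -> cosh s < cosh t.
Proof.
  intros Hs Hst. rewrite !cosh_exp.
  pose proof (exp_ineq1_le s). pose proof (exp_increasing s t Hst).
  set (u := exp s) in *. set (v := exp t) in *.
  assert (E : (v + / v) / 2 - (u + / u) / 2 = (v - u) * (u * v - 1) / (2 * u * v))
    by (field; lra).
  assert (0 < (v - u) * (u * v - 1) / (2 * u * v)).
  { apply Rdiv_lt_0_compat; [apply Rmult_lt_0_compat|]; nra. }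
  lra.
Qed.

Lemma cosh_le s t : 0 <= s -> s <= t -> cosh s <= cosh t.
Proof. intros Hs Hst. destruct (Req_dec s t) as [->|]; [lra|]. left. apply cosh_lt; lra. Qed.

Lemma cosh_ge1 t : 0 <= t -> 1 <= cosh t.
Proof. intros Ht. rewrite <- cosh_0. apply cosh_le; lra. Qed.

Lemma cosh_add_sub_plus p q : cosh (p + q) + cosh (p - q) = 2 * cosh p * cosh q.
Proof.
  unfold Rminus. rewrite !cosh_exp, !exp_plus, exp_Ropp.
  pose proof (exp_pos p). pose proof (exp_pos q). field. lra.
Qed.

Lemma cosh_add_sub_mult p q :
  cosh (p + q) * cosh (p - q) = cosh p ^ 2 + cosh q ^ 2 - 1.
Proof.
  unfold Rminus. rewrite !cosh_exp, !exp_plus, exp_Ropp.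
  pose proof (exp_pos p). pose proof (exp_pos q). field. lra.
Qed.

Lemma arcosh_ge0 t : 1 <= t -> 0 <= arcosh t.
Proof.
  intros. unfold arcosh. rewrite <- ln_1.
  pose proof (sqrt_pos (t ^ 2 - 1)).
  destruct (Req_dec (t + sqrt (t ^ 2 - 1)) 1) as [E|E]; [rewrite E; lra|].
  left. apply ln_increasing; lra.
Qed.

Lemma cosh_arcosh t : 1 <= t -> cosh (arcosh t) = t.
Proof.
  intros. rewrite cosh_exp. unfold arcosh.
  pose proof (sqrt_pos (t ^ 2 - 1)).
  assert (Hs : sqrt (t ^ 2 - 1) * sqrt (t ^ 2 - 1) = t ^ 2 - 1) by (apply sqrt_sqrt; nra).
  rewrite exp_ln by lra.
  set (s := sqrt (t ^ 2 - 1)) in *.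
  assert (Hi : / (t + s) = t - s).
  { apply Rmult_eq_reg_l with (t + s); [rewrite Rinv_r; nra | lra]. }
  rewrite Hi. lra.
Qed.

(* Read P, Q, K as cosh of the half-sum p, of the half-difference q and of the middle
   distance a; the conclusion says a <= p, with equality only if q <> 0. *)
Lemma cosh_mean_bound P Q K C : 1 <= Q -> Q <= P -> 1 < C ->
  P * Q = C * K -> K ^ 2 + C ^ 2 <= P ^ 2 + Q ^ 2 ->
  K <= P /\ (K = P -> 1 < Q).
Proof.
  intros HQ HQP HC Hmul Hsq. split.
  - destruct (Rle_dec K P) as [|HPK]; [assumption|exfalso].
    assert (E : K ^ 2 * (P ^ 2 + Q ^ 2 - K ^ 2 - C ^ 2)
                = - ((K ^ 2 - P ^ 2) * (K ^ 2 - Q ^ 2))).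
    { assert (HPQ : (P * Q) ^ 2 = (C * K) ^ 2) by (rewrite Hmul; reflexivity). lra. }
    assert (0 <= K ^ 2 * (P ^ 2 + Q ^ 2 - K ^ 2 - C ^ 2)) by nra.
    assert (0 < (K ^ 2 - P ^ 2) * (K ^ 2 - Q ^ 2)) by (apply Rmult_lt_0_compat; nra).
    lra.
  - intros ->. assert (Q = C) by nra. lra.
Qed.

Lemma sq_mid_lt_of_cosh_rel_ordered a b c C : 0 <= a -> 0 <= c -> c <= b -> 1 < C ->
  cosh b + cosh c = 2 * C * cosh a ->
  cosh a ^ 2 + C ^ 2 - 1 <= cosh b * cosh c ->
  2 * a ^ 2 < b ^ 2 + c ^ 2.
Proof.
  intros Ha Hc Hcb HC Hsum Hmul.
  set (p := (b + c) / 2). set (q := (b - c) / 2).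
  assert (Hb : b = p + q) by (unfold p, q; field).
  assert (Hc' : c = p - q) by (unfold p, q; field).
  rewrite Hb, Hc', cosh_add_sub_plus in Hsum. rewrite Hb, Hc', cosh_add_sub_mult in Hmul.
  assert (Hqp : q <= p) by (unfold p, q; lra).
  assert (Hq : 0 <= q) by (unfold q; lra).
  assert (HQ : 1 <= cosh q) by (apply cosh_ge1; assumption).
  assert (HQP : cosh q <= cosh p) by (apply cosh_le; assumption).
  destruct (cosh_mean_bound (cosh p) (cosh q) (cosh a) C HQ HQP HC) as [HKP HKQ]; [lra|lra|].
  assert (Hap : a <= p).
  { destruct (Rle_dec a p) as [|Hpa]; [assumption|].
    pose proof (cosh_lt p a ltac:(lra) ltac:(lra)). lra. }
  assert (Hstrict : a < p \/ 0 < q).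
  { destruct (Req_dec a p) as [->|]; [right|left; lra].
    specialize (HKQ eq_refl).
    destruct (Req_dec q 0) as [E|]; [rewrite E, cosh_0 in HKQ; lra | lra]. }
  rewrite Hb, Hc'. destruct Hstrict; nra.
Qed.

Lemma sq_mid_lt_of_cosh_rel a b c C : 0 <= a -> 0 <= b -> 0 <= c -> 1 < C ->
  cosh b + cosh c = 2 * C * cosh a ->
  cosh a ^ 2 + C ^ 2 - 1 <= cosh b * cosh c ->
  2 * a ^ 2 < b ^ 2 + c ^ 2.
Proof.
  intros Ha Hb Hc HC Hsum Hmul. destruct (Rle_dec c b).
  - exact (sq_mid_lt_of_cosh_rel_ordered a b c C Ha Hc r HC Hsum Hmul).
  - rewrite Rplus_comm. apply (sq_mid_lt_of_cosh_rel_ordered a c b C); lra.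
Qed.

Definition cosh_dH (p q : pt) : R :=
  1 + ((fst p - fst q) ^ 2 + (snd p - snd q) ^ 2) / (2 * snd p * snd q).

Lemma dH_arcosh p q : dH p q = arcosh (cosh_dH p q).
Proof. reflexivity. Qed.

Lemma cosh_dH_ge1 p q : inH p -> inH q -> 1 <= cosh_dH p q.
Proof.
  destruct p as [x y], q as [x' y']. unfold inH, cosh_dH; cbn. intros.
  assert (0 <= ((x - x') ^ 2 + (y - y') ^ 2) / (2 * y * y')).
  { pose proof (pow2_ge_0 (x - x')). pose proof (pow2_ge_0 (y - y')).
    unfold Rdiv. apply Rmult_le_pos; [lra | left; apply Rinv_0_lt_compat; nra]. }
  lra.
Qed.

Lemma cosh_dH_sym p q : cosh_dH p q = cosh_dH q p.
Proof. unfold cosh_dH. f_equal. f_equal; ring. Qed.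

Lemma dH_sym p q : dH p q = dH q p.
Proof. rewrite !dH_arcosh, cosh_dH_sym. reflexivity. Qed.

Lemma mob_den_pos g p : det g = 1 -> inH p ->
  0 < (mc g * fst p + md g) ^ 2 + (mc g * snd p) ^ 2.
Proof.
  destruct g as [a b c d], p as [x y]. unfold det, inH; cbn. intros H Hy.
  destruct (Req_dec c 0) as [->|Hc].
  - assert (0 < d * d) by (apply Rsqr_pos_lt; intros ->; lra).
    replace ((0 * x + d) ^ 2 + (0 * y) ^ 2) with (d * d) by ring. lra.
  - assert (0 < c * c) by (apply Rsqr_pos_lt; assumption).
    assert (0 < (c * y) ^ 2).
    { replace ((c * y) ^ 2) with ((c * c) * (y * y)) by ring. apply Rmult_lt_0_compat; nra. }
    pose proof (pow2_ge_0 (c * x + d)). lra.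
Qed.

Lemma det_minv g : det (minv g) = det g.
Proof. destruct g; unfold det, minv; cbn. ring. Qed.

Lemma minv_involutive g : minv (minv g) = g.
Proof. destruct g; unfold minv; cbn. rewrite !Ropp_involutive. reflexivity. Qed.

Lemma mob_inH g p : det g = 1 -> inH p -> inH (mob g p).
Proof.
  intros H Hp. pose proof (mob_den_pos g p H Hp).
  destruct g as [a b c d], p as [x y]. unfold mob, inH in *; cbn in *.
  rewrite H. apply Rdiv_lt_0_compat; lra.
Qed.

Lemma cosh_dH_mob g p q : det g = 1 -> inH p -> inH q ->
  cosh_dH (mob g p) (mob g q) = cosh_dH p q.
Proof.
  intros H Hp Hq. pose proof (mob_den_pos g p H Hp). pose proof (mob_den_pos g q H Hq).
  destruct g as [a b c d], p as [x y], q as [x' y'].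
  unfold cosh_dH, mob, det, inH in *; cbn in *.
  field. repeat split; lra.
Qed.

Lemma mob_minv_mob g p : det g = 1 -> inH p -> mob (minv g) (mob g p) = p.
Proof.
  intros H Hp. pose proof (mob_den_pos g p H Hp).
  destruct g as [a b c d], p as [x y]. unfold mob, minv, det, inH in *; cbn in *.
  f_equal; field; split; try lra;
  match goal with |- ?E <> 0 =>
    replace E with ((a * d - b * c) ^ 2 * ((c * x + d) ^ 2 + (c * y) ^ 2)) by ring end;
  rewrite H; lra.
Qed.

Lemma hyperbolic_minv g : hyperbolic g -> hyperbolic (minv g).
Proof. unfold hyperbolic, minv; cbn. rewrite Rplus_comm. auto. Qed.

(* With z = x + i y, axis_defect g z = c |z|^2 + (d - a) Re z - b vanishes exactly on the
   geodesic joining the roots of c t^2 + (d - a) t - b, the boundary fixed points of g. *)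
Definition axis_defect (g : mat) (p : pt) : R :=
  mc g * (fst p ^ 2 + snd p ^ 2) + (md g - ma g) * fst p - mb g.

Definition axis_eq (g : mat) (p : pt) : Prop := axis_defect g p = 0.

Lemma fixes_ideal_Fin g x : fixes_ideal g (Fin x) -> mc g * x ^ 2 + (md g - ma g) * x - mb g = 0.
Proof.
  unfold fixes_ideal, ideal_act. destruct (Req_EM_T _ _) as [E|E]; intro H; [discriminate|].
  injection H as H.
  assert (ma g * x + mb g = x * (mc g * x + md g)) by (rewrite <- H at 2; field; auto).
  nra.
Qed.

Lemma fixes_ideal_Inf g : fixes_ideal g Inf -> mc g = 0.
Proof.
  unfold fixes_ideal, ideal_act. destruct (Req_EM_T _ _); [auto | discriminate].
Qed.

Lemma hyperbolic_trace_sq g : hyperbolic g -> 4 < (ma g + md g) ^ 2.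
Proof. unfold hyperbolic, Rabs. destruct (Rcase_abs _); intros; nra. Qed.

Lemma on_axis_inH g p : on_axis g p -> inH p.
Proof. intros (? & ? & _ & _ & _ & [Hp _]). exact Hp. Qed.

Lemma on_axis_axis_eq g z : det g = 1 -> hyperbolic g -> on_axis g z -> axis_eq g z.
Proof.
  intros H Hh (P & Q & Hne & HP & HQ & Hz & Hg).
  pose proof (hyperbolic_trace_sq g Hh) as Htr. unfold axis_eq, axis_defect.
  destruct P as [|x1], Q as [|x2]; try contradiction.
  - apply fixes_ideal_Inf in HP. apply fixes_ideal_Fin in HQ. rewrite Hg, HP. rewrite HP in HQ. lra.
  - apply fixes_ideal_Fin in HP. apply fixes_ideal_Inf in HQ. rewrite Hg, HQ. rewrite HQ in HP. lra.
  - apply fixes_ideal_Fin in HP. apply fixes_ideal_Fin in HQ.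
    assert (Hx : x1 <> x2) by (intros ->; apply Hne; reflexivity).
    assert (Hsum : mc g * (x1 + x2) + (md g - ma g) = 0).
    { assert (E : (x1 - x2) * (mc g * (x1 + x2) + (md g - ma g)) = 0) by nra.
      apply Rmult_integral in E. destruct E; [lra | assumption]. }
    destruct (Req_dec (mc g) 0) as [Ec|Ec].
    + (* c = 0 with two finite fixed points forces g = +-1, which is not hyperbolic. *)
      exfalso. unfold det in H. rewrite Ec in Hsum, HP, H.
      assert (md g = ma g) by lra. nra.
    + assert (Hb : mb g = - mc g * x1 * x2) by nra.
      assert (Hc : fst z ^ 2 + snd z ^ 2 - (x1 + x2) * fst z + x1 * x2 = 0) by nra.
      rewrite Hb. replace (md g - ma g) with (- mc g * (x1 + x2)) by lra.
      transitivity (mc g * (fst z ^ 2 + snd z ^ 2 - (x1 + x2) * fst z + x1 * x2)); [ring|].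
      rewrite Hc. ring.
Qed.

Lemma axis_eq_minv g p : axis_eq g p -> axis_eq (minv g) p.
Proof. unfold axis_eq, axis_defect, minv; cbn. lra. Qed.

(* On the axis, det g = 1 and axis_eq determine b and d rationally from a, c and the point;
   after this elimination the identities below are identities of rational functions. *)
Lemma axis_eq_solve a b c d x y : a * d - b * c = 1 -> 0 < y ->
  c * (x ^ 2 + y ^ 2) + (d - a) * x - b = 0 ->
  a - c * x <> 0 /\ d = (1 + c ^ 2 * (x ^ 2 + y ^ 2) - a * c * x) / (a - c * x) /\
  b = c * (x ^ 2 + y ^ 2) + (d - a) * x.
Proof.
  intros H Hy Hax.
  assert (Hb : b = c * (x ^ 2 + y ^ 2) + (d - a) * x) by lra.
  assert (Hd : d * (a - c * x) = 1 + c ^ 2 * (x ^ 2 + y ^ 2) - a * c * x) by (rewrite Hb in H; nra).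
  assert (Hn : a - c * x <> 0).
  { intro E. rewrite E in Hd. pose proof (pow2_ge_0 (c * y)). nra. }
  repeat split; auto. apply (Rmult_eq_reg_r (a - c * x)); auto.
  rewrite Hd. field. auto.
Qed.

(* After eliminating b and d, the denominators left by field are sums of squares built from
   1 + (c y)^2 and (a - c x). *)
Ltac axis_field_side a c x y :=
  repeat split; try assumption; try lra;
  intro; pose proof (pow2_ge_0 (c * y)); pose proof (pow2_ge_0 (c * y * c * y));
  pose proof (pow2_ge_0 (c * y * (a - c * x))); pose proof (pow2_ge_0 (a - c * x));
  pose proof (Rsqr_pos_lt (a - c * x)); unfold Rsqr in *; lra.

Lemma axis_eq_mob g w : det g = 1 -> inH w -> axis_eq g w -> axis_eq g (mob g w).
Proof.
  intros H Hw Hax. destruct g as [a b c d], w as [x y].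
  unfold axis_eq, axis_defect, mob, det, inH in *; cbn in *.
  destruct (axis_eq_solve a b c d x y H Hw Hax) as (Hn & Hd & Hb).
  subst b d. field. axis_field_side a c x y.
Qed.

(* cosh of the translation length l, since |tr g| = 2 cosh (l / 2). *)
Definition cosh_transl (g : mat) : R := ((ma g + md g) ^ 2 - 2) / 2.

Lemma cosh_dH_transl g w : det g = 1 -> inH w -> axis_eq g w ->
  cosh_dH w (mob g w) = cosh_transl g.
Proof.
  intros H Hw Hax. destruct g as [a b c d], w as [x y].
  unfold cosh_dH, cosh_transl, axis_eq, axis_defect, mob, det, inH in *; cbn in *.
  destruct (axis_eq_solve a b c d x y H Hw Hax) as (Hn & Hd & Hb).
  subst b d. field. axis_field_side a c x y.
Qed.

Lemma cosh_dH_orbit_plus g w p : det g = 1 -> inH w -> inH p -> axis_eq g w ->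
  cosh_dH p (mob g w) + cosh_dH p (mob (minv g) w) = 2 * cosh_transl g * cosh_dH p w.
Proof.
  intros H Hw Hp Hax. destruct g as [a b c d], w as [x y], p as [u v].
  unfold cosh_dH, cosh_transl, axis_eq, axis_defect, mob, minv, det, inH in *; cbn in *.
  destruct (axis_eq_solve a b c d x y H Hw Hax) as (Hn & Hd & Hb).
  subst b d. field. axis_field_side a c x y.
Qed.

Lemma cosh_dH_orbit_mult g w p : det g = 1 -> inH w -> inH p -> axis_eq g w ->
  cosh_dH p (mob g w) * cosh_dH p (mob (minv g) w) =
  cosh_dH p w ^ 2 + cosh_transl g ^ 2 - 1 +
  ((ma g + md g) * axis_defect g p) ^ 2 / (4 * snd p ^ 2).
Proof.
  intros H Hw Hp Hax. destruct g as [a b c d], w as [x y], p as [u v].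
  unfold cosh_dH, cosh_transl, axis_eq, axis_defect, mob, minv, det, inH in *; cbn in *.
  destruct (axis_eq_solve a b c d x y H Hw Hax) as (Hn & Hd & Hb).
  subst b d. field. axis_field_side a c x y.
Qed.

Lemma cosh_transl_gt1 g : hyperbolic g -> 1 < cosh_transl g.
Proof. intros Hh. pose proof (hyperbolic_trace_sq g Hh). unfold cosh_transl. lra. Qed.

Lemma cosh_dH_refl p : cosh_dH p p = 1.
Proof. unfold cosh_dH. rewrite !Rminus_diag. unfold Rdiv. ring. Qed.

Lemma mob_axis_neq g w : det g = 1 -> hyperbolic g -> inH w -> axis_eq g w -> mob g w <> w.
Proof.
  intros H Hh Hw Hax E. pose proof (cosh_dH_transl g w H Hw Hax) as Ht.
  rewrite E, cosh_dH_refl in Ht. pose proof (cosh_transl_gt1 g Hh). lra.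
Qed.

Lemma dH_sq_orbit_convex g w p : det g = 1 -> hyperbolic g -> inH w -> inH p -> axis_eq g w ->
  2 * dH p w ^ 2 < dH p (mob g w) ^ 2 + dH p (mob (minv g) w) ^ 2.
Proof.
  intros H Hh Hw Hp Hax.
  assert (Hgw : inH (mob g w)) by (apply mob_inH; auto).
  assert (Hgw' : inH (mob (minv g) w)) by (apply mob_inH; [rewrite det_minv|]; auto).
  rewrite !dH_arcosh.
  apply (sq_mid_lt_of_cosh_rel _ _ _ (cosh_transl g));
    try apply arcosh_ge0; try apply cosh_dH_ge1; auto using cosh_transl_gt1.
  all: rewrite !cosh_arcosh by (apply cosh_dH_ge1; auto).
  - apply cosh_dH_orbit_plus; auto.
  - rewrite cosh_dH_orbit_mult by auto.
    assert (0 <= ((ma g + md g) * axis_defect g p) ^ 2 / (4 * snd p ^ 2)).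
    { unfold Rdiv. apply Rmult_le_pos; [apply pow2_ge_0|].
      left. apply Rinv_0_lt_compat. unfold inH in Hp. nra. }
    lra.
Qed.

Definition rho_sq (q w : pt2) : R := dH (fst q) (fst w) ^ 2 + dH (snd q) (snd w) ^ 2.

Lemma rho_sq_ge0 q w : 0 <= rho_sq q w.
Proof.
  unfold rho_sq. pose proof (pow2_ge_0 (dH (fst q) (fst w))).
  pose proof (pow2_ge_0 (dH (snd q) (snd w))). lra.
Qed.

Lemma rho_le_iff a b c d : rho a b <= rho c d <-> rho_sq a b <= rho_sq c d.
Proof.
  unfold rho. fold (rho_sq a b) (rho_sq c d). split; intro H.
  - apply sqrt_le_0; auto using rho_sq_ge0.
  - apply sqrt_le_1_alt; assumption.
Qed.

Lemma rho_sq_eq a b c d : rho a b = rho c d -> rho_sq a b = rho_sq c d.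
Proof. unfold rho. intros. apply sqrt_inj; auto using rho_sq_ge0. Qed.

Lemma rho_sym u v : rho u v = rho v u.
Proof. unfold rho. rewrite (dH_sym (fst u)), (dH_sym (snd u)). reflexivity. Qed.

Lemma act2_inH2 g1 g2 u : det g1 = 1 -> det g2 = 1 -> inH2 u -> inH2 (act2 g1 g2 u).
Proof. intros H1 H2 [Hu1 Hu2]. split; apply mob_inH; auto. Qed.

Lemma rho_act2 g1 g2 u v : det g1 = 1 -> det g2 = 1 -> inH2 u -> inH2 v ->
  rho (act2 g1 g2 u) (act2 g1 g2 v) = rho u v.
Proof.
  intros H1 H2 [Hu1 Hu2] [Hv1 Hv2]. unfold rho, act2; cbn [fst snd].
  rewrite !dH_arcosh, !cosh_dH_mob; auto.
Qed.

Lemma act2_minv_act2 g1 g2 u : det g1 = 1 -> det g2 = 1 -> inH2 u ->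
  act2 (minv g1) (minv g2) (act2 g1 g2 u) = u.
Proof.
  intros H1 H2 [Hu1 Hu2]. unfold act2; cbn [fst snd].
  rewrite !mob_minv_mob; auto. destruct u; reflexivity.
Qed.

Lemma rho_act2_adjoint g1 g2 u v : det g1 = 1 -> det g2 = 1 -> inH2 u -> inH2 v ->
  rho u (act2 g1 g2 v) = rho (act2 (minv g1) (minv g2) u) v.
Proof.
  intros H1 H2 Hu Hv.
  rewrite <- (rho_act2 (minv g1) (minv g2)), act2_minv_act2;
    rewrite ?det_minv; auto using act2_inH2.
Qed.

Definition on_axes (g1 g2 : mat) (w : pt2) : Prop :=
  inH2 w /\ axis_eq g1 (fst w) /\ axis_eq g2 (snd w).

Lemma on_axes_act2 g1 g2 w : det g1 = 1 -> det g2 = 1 ->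
  on_axes g1 g2 w -> on_axes g1 g2 (act2 g1 g2 w).
Proof.
  intros H1 H2 (Hw & Ha1 & Ha2). destruct Hw as [Hw1 Hw2].
  repeat split; cbn; auto using mob_inH, axis_eq_mob.
Qed.

Lemma on_axes_minv g1 g2 w : on_axes g1 g2 w -> on_axes (minv g1) (minv g2) w.
Proof. intros (Hw & Ha1 & Ha2). repeat split; try apply Hw; auto using axis_eq_minv. Qed.

Lemma act2_axes_neq g1 g2 w : det g1 = 1 -> hyperbolic g1 ->
  on_axes g1 g2 w -> act2 g1 g2 w <> w.
Proof.
  intros H1 Hh1 ([Hw1 _] & Ha1 & _) E.
  apply (mob_axis_neq g1 (fst w)); auto. exact (f_equal fst E).
Qed.

Lemma rho_sq_orbit_convex g1 g2 w q : det g1 = 1 -> det g2 = 1 ->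
  hyperbolic g1 -> hyperbolic g2 -> on_axes g1 g2 w -> inH2 q ->
  2 * rho_sq q w < rho_sq q (act2 g1 g2 w) + rho_sq q (act2 (minv g1) (minv g2) w).
Proof.
  intros H1 H2 Hh1 Hh2 ([Hw1 Hw2] & Ha1 & Ha2) [Hq1 Hq2]. unfold rho_sq, act2; cbn [fst snd].
  pose proof (dH_sq_orbit_convex g1 (fst w) (fst q) H1 Hh1 Hw1 Hq1 Ha1).
  pose proof (dH_sq_orbit_convex g2 (snd w) (snd q) H2 Hh2 Hw2 Hq2 Ha2).
  lra.
Qed.

Lemma rho_sq_orbit_ge g1 g2 z q : det g1 = 1 -> det g2 = 1 ->
  hyperbolic g1 -> hyperbolic g2 -> on_axes g1 g2 z -> inH2 q ->
  rho_sq q z <= rho_sq q (act2 g1 g2 z) ->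
  forall n, rho_sq q z <= rho_sq q (Nat.iter n (act2 g1 g2) z).
Proof.
  intros H1 H2 Hh1 Hh2 Hz Hq H01.
  apply (convex_seq_ge_first (fun n => rho_sq q (Nat.iter n (act2 g1 g2) z))); [exact H01|].
  intro n. cbn beta.
  assert (Hn : on_axes g1 g2 (Nat.iter n (act2 g1 g2) z))
    by (apply Nat.iter_invariant; auto using on_axes_act2).
  pose proof (rho_sq_orbit_convex g1 g2 _ q H1 H2 Hh1 Hh2 (on_axes_act2 _ _ _ H1 H2 Hn) Hq).
  rewrite act2_minv_act2 in H by (auto; apply Hn).
  rewrite !Nat.iter_succ. lra.
Qed.

Lemma bisectors_disjoint g1 g2 z x : det g1 = 1 -> det g2 = 1 ->
  hyperbolic g1 -> hyperbolic g2 -> on_axes g1 g2 z ->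
  ~ (bisector z (act2 g1 g2 z) x /\ bisector z (act2 (minv g1) (minv g2) z) x).
Proof.
  intros H1 H2 Hh1 Hh2 Hz [[Hx E1] [_ E2]].
  apply rho_sq_eq in E1, E2.
  pose proof (rho_sq_orbit_convex g1 g2 z x H1 H2 Hh1 Hh2 Hz Hx). lra.
Qed.

Lemma rho_iter_act2_ge g1 g2 z q : det g1 = 1 -> det g2 = 1 ->
  hyperbolic g1 -> hyperbolic g2 -> on_axes g1 g2 z ->
  halfspace z (act2 (minv g1) (minv g2) z) q ->
  forall n, rho z q <= rho z (Nat.iter n (act2 g1 g2) q).
Proof.
  intros H1 H2 Hh1 Hh2 Hz [Hq Hle] n.
  assert (Hm1 : det (minv g1) = 1) by (rewrite det_minv; auto).
  assert (Hm2 : det (minv g2) = 1) by (rewrite det_minv; auto).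
  rewrite (iter_adjoint inH2 rho (act2 g1 g2) (act2 (minv g1) (minv g2)));
    auto using act2_inH2, rho_act2_adjoint; [|apply Hz].
  rewrite (rho_sym z), (rho_sym _ q). apply rho_le_iff.
  apply rho_sq_orbit_ge; auto using hyperbolic_minv, on_axes_minv.
  apply rho_le_iff, Hle.
Qed.

Lemma halfspaces_dirichlet_cyclic g1 g2 z q : det g1 = 1 -> det g2 = 1 ->
  hyperbolic g1 -> hyperbolic g2 -> on_axes g1 g2 z ->
  halfspace z (act2 g1 g2 z) q -> halfspace z (act2 (minv g1) (minv g2) z) q ->
  dirichlet_cyclic g1 g2 z q.
Proof.
  intros H1 H2 Hh1 Hh2 Hz Hhs Hhs'. split; [apply Hhs|]. intros n _.
  unfold act2_pow. destruct (Z.leb 0 n).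
  - apply rho_iter_act2_ge; auto.
  - apply rho_iter_act2_ge; rewrite ?det_minv, ?minv_involutive;
      auto using hyperbolic_minv, on_axes_minv.
Qed.

Lemma halfspace_of_rho_act2 g1 g2 z q : det g1 = 1 -> det g2 = 1 -> inH2 z -> inH2 q ->
  rho z q <= rho z (act2 g1 g2 q) -> halfspace z (act2 (minv g1) (minv g2) z) q.
Proof.
  intros H1 H2 Hz Hq Hle. split; [assumption|].
  rewrite rho_act2_adjoint, (rho_sym z), (rho_sym _ q) in Hle; auto.
Qed.

Lemma dirichlet_cyclic_halfspaces g1 g2 z q : det g1 = 1 -> det g2 = 1 ->
  hyperbolic g1 -> hyperbolic g2 -> on_axes g1 g2 z -> dirichlet_cyclic g1 g2 z q ->
  halfspace z (act2 g1 g2 z) q /\ halfspace z (act2 (minv g1) (minv g2) z) q.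
Proof.
  intros H1 H2 Hh1 Hh2 Hz [Hq Hdir].
  assert (Hm1 : det (minv g1) = 1) by (rewrite det_minv; auto).
  assert (Hm2 : det (minv g2) = 1) by (rewrite det_minv; auto).
  split.
  - rewrite <- (minv_involutive g1), <- (minv_involutive g2) at 1.
    apply halfspace_of_rho_act2; auto; try apply Hz.
    apply (Hdir (-1)%Z). exists z. split; [apply Hz|].
    apply act2_axes_neq; auto using hyperbolic_minv, on_axes_minv.
  - apply halfspace_of_rho_act2; auto; try apply Hz.
    apply (Hdir 1%Z). exists z. split; [apply Hz|]. apply act2_axes_neq; auto.
Qed.

Theorem mainTheorem4 (g1 g2 : mat) (z : pt2) :
  inSL2 g1 -> inSL2 g2 ->
  hyperbolic g1 -> hyperbolic g2 ->
  on_axis g1 (fst z) -> on_axis g2 (snd z) ->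
  (forall x : pt2,
     ~ (bisector z (act2 g1 g2 z) x /\
        bisector z (act2 (minv g1) (minv g2) z) x)) /\
  (forall q : pt2,
     dirichlet_cyclic g1 g2 z q <->
     (halfspace z (act2 g1 g2 z) q /\
      halfspace z (act2 (minv g1) (minv g2) z) q)).
Proof.
  unfold inSL2. intros H1 H2 Hh1 Hh2 Hax1 Hax2.
  assert (Hz : on_axes g1 g2 z).
  { repeat split; eauto using on_axis_inH, on_axis_axis_eq. }
  split.
  - intro x. apply bisectors_disjoint; auto.
  - intro q. split.
    + apply dirichlet_cyclic_halfspaces; auto.
    + intros []. apply halfspaces_dirichlet_cyclic; auto.
Qed.
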